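(* Fix an observation sequence $\{s_t,a_t\}_{t\in\mathbb Z}$, integers $t_1\le t_2$, $\mathbb I=[t_1:t_2]$, and $\theta,\hat\theta\in\Theta$ (possibly equal). Let $\{\varphi^\theta_t\}_{t\in\mathbb I},\{\hat\varphi^{\hat\theta}_t\}_{t\in\mathbb I},\{\rho^\theta_t\}_{t\in\mathbb I},\{\hat\rho^{\hat\theta}_t\}_{t\in\mathbb I}$ be strictly positive probability measures on $\mathcal O\times\{0,1\}$ such that $F^\theta_t\varphi^\theta_{t-1}=\varphi^\theta_t$ and $F^{\hat\theta}_t\hat\varphi^{\hat\theta}_{t-1}=\hat\varphi^{\hat\theta}_t$ for $t\in\mathbb I$, $t\ne t_1$, and $B^\theta_t\rho^\theta_{t+1}=\rho^\theta_t$ and $B^{\hat\theta}_t\hat\rho^{\hat\theta}_{t+1}=\hat\rho^{\hat\theta}_t$ for $t\in\mathbb I$, $t\ne t_2$. Then $$\big\|(\varphi^\theta\otimes\rho^\theta)_{t_2}-(\hat\varphi^{\hat\theta}\otimes\rho^\theta)_{t_2}\big\|_{TV}\le\Big(1-\frac{\epsilon_b^2\zeta}{|\mathcal O|}\Big)^{t_2-t_1}+\frac{|\mathcal O|\,z_{\theta,\hat\theta}\,L_{\theta,\|\hat\theta-\theta\|_2}}{\epsilon_b^2\zeta}\|\hat\theta-\theta\|_2,$$ $$\big\|(\hat\varphi^{\hat\theta}\otimes\rho^\theta)_{t_1}-(\hat\varphi^{\hat\theta}\otimes\hat\rho^{\hat\theta})_{t_1}\big\|_{TV}\le\Big(1-\frac{\epsilon_b^2\zeta}{|\mathcal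 O|}\Big)^{t_2-t_1}+\frac{|\mathcal O|\,z_{\theta,\hat\theta}\,L_{\theta,\|\hat\theta-\theta\|_2}}{\epsilon_b^2\zeta}\|\hat\theta-\theta\|_2.$$
   Context: $\mathcal S,\mathcal A,\mathcal O$ are finite sets; $\Theta=\Theta_{hi}\times\Theta_{lo}\times\Theta_b$ is a convex compact subset of a Euclidean space. There are policies $\pi_{hi}(o\mid s;\theta_{hi})$ (distribution on $\mathcal O$), $\pi_{lo}(a\mid s,o;\theta_{lo})$ (distribution on $\mathcal A$), $\pi_b(b\mid s,o';\theta_b)$ (distribution on $\{0,1\}$); standing assumption: on an open set $\tilde\Theta\supseteq\Theta$ they are defined, strictly positive and continuously differentiable in $\theta$. For fixed $\zeta\in(0,1)$, $\bar\pi_{hi}(o_t\mid s_t,o_{t-1},b_t;\theta_{hi})$ equals $\pi_{hi}(o_t\mid s_t;\theta_{hi})$ if $b_t=1$, $1-\zeta+\zeta/|\mathcal O|$ if $b_t=0,o_t=o_{t-1}$, $\zeta/|\mathcal O|$ if $b_t=0,o_t\ne o_{t-1}$. Let $\epsilon_b>0$ be a constant for which there is a conditional distribution $\bar\pi_{o,b}(o_t,b_t\mid s_t;\theta)$ on $\mathcal O\times\{0,1\}$ with $0<\epsilon_b\zeta\bar\pi_{o,b}(o_t,b_t\mid s_t;\theta)\le\pi_b(b_t\mid s_t,o_{t-1};\theta_b)\bar\pi_{hi}(o_t\mid s_t,o_{t-1},b_t;\theta_{hi})\le\epsilon_b^{-1}|\mathcal O|\bar\pi_{o,b}(o_t,b_t\mid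 s_t;\theta)$ for all $\theta\in\Theta$ and all arguments (such $\epsilon_b$ exists). Define $h(\theta;o_{t-1},s_t,a_t,o_t,b_t)=\pi_b(b_t\mid s_t,o_{t-1};\theta_b)\bar\pi_{hi}(o_t\mid s_t,o_{t-1},b_t;\theta_{hi})\pi_{lo}(a_t\mid s_t,o_t;\theta_{lo})$. For $\theta\in\Theta,\delta>0$, $L_{\theta,\delta}$ is the smallest $L$ such that for all arguments, $\tilde\theta\mapsto h(\tilde\theta;\cdot)$ is $L$-Lipschitz on $\{\tilde\theta\in\Theta:\|\tilde\theta-\theta\|_2\le\delta\}$. Let $z_{\theta,\hat\theta}=\max_{s',a'}\frac{[\max_{o_{t-1},o_t,b_t}h(\theta;o_{t-1},s',a',o_t,b_t)]\vee[\max_{o_{t-1},o_t,b_t}h(\hat\theta;o_{t-1},s',a',o_t,b_t)]}{[\min_{o_{t-1},o_t,b_t}h(\theta;o_{t-1},s',a',o_t,b_t)][\min_{o_{t-1},o_t,b_t}h(\hat\theta;o_{t-1},s',a',o_t,b_t)]}$. Given the observation sequence, for probability measures $\varphi,\rho$ on $\mathcal O\times\{0,1\}$: the forward operator $F^\theta_t\varphi(o_t,b_t)\propto\sum_{o_{t-1},b_{t-1}}h(\theta;o_{t-1},s_t,a_t,o_t,b_t)\varphi(o_{t-1},b_{t-1})$ and backward operator $B^\theta_t\rho(o_t,b_t)\propto\sum_{o_{t+1},b_{t+1}}h(\theta;o_t,s_{t+1},a_{t+1},o_{t+1},b_{t+1})\rho(o_{t+1},b_{t+1})$ (both normalized to probability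 measures). For families $\varphi,\rho$, $(\varphi\otimes\rho)_t(o_t,b_t)\propto\varphi_t(o_t,b_t)\rho_t(o_t,b_t)$ (normalized). $\|\nu_1-\nu_2\|_{TV}=\frac12\sum|\nu_1-\nu_2|$. *)

From HB Require Import structures.
From mathcomp Require Import all_boot all_order all_algebra.
From mathcomp Require Import all_classical all_reals all_analysis.
Set Implicit Arguments. Unset Strict Implicit. Unset Printing Implicit Defensive.
Import Order.TTheory GRing.Theory Num.Theory.
Import numFieldNormedType.Exports.
Local Open Scope ring_scope.
Local Open Scope classical_set_scope.

Section Generic.
Variable R : realType.

Definition convex_rV n (C : set 'rV[R]_n) :=
  forall x y (l : R), C x -> C y -> 0 <= l -> l <= 1 -> C (l *: x + (1 - l) *: y).

Definition C1_on n (U : set 'rV[R]_n) (f : 'rV[R]_n -> R) :=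
  (forall x, U x -> differentiable f x) /\
  (forall i : 'I_n, forall x, U x ->
     {for x, continuous (fun y => derive f y (delta_mx 0 i))}).

Definition sqnorm n (v : 'rV[R]_n) : R := \sum_i (v 0 i) ^+ 2.

Definition is_distr (T : finType) (f : T -> R) :=
  (forall x, 0 <= f x) /\ \sum_x f x = 1.
End Generic.

Section Model.
Variables (R : realType) (S A O : finType) (nh nl nb : nat).

Definition param := ('rV[R]_nh * 'rV[R]_nl * 'rV[R]_nb)%type.

Definition dist2 (x y : param) : R :=
  Num.sqrt (sqnorm (x.1.1 - y.1.1) + sqnorm (x.1.2 - y.1.2) + sqnorm (x.2 - y.2)).

Definition inTheta (Th : set 'rV[R]_nh) (Tl : set 'rV[R]_nl) (Tb : set 'rV[R]_nb)
  (x : param) : Prop := Th x.1.1 /\ Tl x.1.2 /\ Tb x.2.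

Variables (pihi : 'rV[R]_nh -> S -> O -> R)
          (pilo : 'rV[R]_nl -> S -> O -> A -> R)
          (pib  : 'rV[R]_nb -> S -> O -> bool -> R)  (* pi_b(b | s, o'; th_b), b=true <-> 1 *)
          (zeta : R).

Definition cardO : R := #|O|%:R.

Definition pihibar (th : 'rV[R]_nh) (s : S) (o' : O) (b : bool) (o : O) : R :=
  if b then pihi th s o
  else if o == o' then 1 - zeta + zeta / cardO else zeta / cardO.

Definition hfun (th : param) (o' : O) (s : S) (a : A) (o : O) (b : bool) : R :=
  pib th.2 s o' b * pihibar th.1.1 s o' b o * pilo th.1.2 s o a.

Definition Lip (Th : set 'rV[R]_nh) (Tl : set 'rV[R]_nl) (Tb : set 'rV[R]_nb)
  (th : param) (delta : R) : R :=
  inf [set L : R | 0 <= L /\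
    forall (o' : O) (s : S) (a : A) (o : O) (b : bool) (x y : param),
      inTheta Th Tl Tb x -> inTheta Th Tl Tb y ->
      dist2 x th <= delta -> dist2 y th <= delta ->
      `|hfun x o' s a o b - hfun y o' s a o b| <= L * dist2 x y].

Definition hmax (th : param) (s : S) (a : A) : R :=
  \big[Num.max/0]_(p : O * O * bool) hfun th p.1.1 s a p.1.2 p.2.
Definition hmin (th : param) (s : S) (a : A) : R :=
  \big[Num.min/hmax th s a]_(p : O * O * bool) hfun th p.1.1 s a p.1.2 p.2.

Definition zcoef (th th' : param) : R :=
  \big[Num.max/0]_(p : S * A)
    (Num.max (hmax th p.1 p.2) (hmax th' p.1 p.2) /
     (hmin th p.1 p.2 * hmin th' p.1 p.2)).

Definition meas := (O -> bool -> R)%type.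

Definition normalize (f : meas) : meas :=
  fun o b => f o b / \sum_(p : O * bool) f p.1 p.2.

Variables (sq : int -> S) (aq : int -> A).

Definition Fop (th : param) (t : int) (phi : meas) : meas :=
  normalize (fun o b => \sum_(p : O * bool)
     hfun th p.1 (sq t) (aq t) o b * phi p.1 p.2).

Definition Bop (th : param) (t : int) (rho : meas) : meas :=
  normalize (fun o b => \sum_(p : O * bool)
     hfun th o (sq (t + 1)) (aq (t + 1)) p.1 p.2 * rho p.1 p.2).
End Model.

Definition otimes (R : realType) (O : finType) (phi rho : meas R O) : meas R O :=
  normalize (fun o b => phi o b * rho o b).

Definition tv (R : realType) (O : finType) (f g : meas R O) : R :=
  2^-1 * \sum_(p : O * bool) `|f p.1 p.2 - g p.1 p.2|.

Definition strict_prob (R : realType) (O : finType) (f : meas R O) :=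
  (forall o b, 0 < f o b) /\ \sum_(p : O * bool) f p.1 p.2 = 1.

From HB Require Import structures.
From mathcomp Require Import all_boot all_order all_algebra.
From mathcomp Require Import all_classical all_reals all_analysis.
From mathcomp Require Import ring lra zify.
Set Implicit Arguments. Unset Strict Implicit. Unset Printing Implicit Defensive.
Import Order.TTheory GRing.Theory Num.Theory.
Import numFieldNormedType.Exports.
Local Open Scope ring_scope.
Local Open Scope classical_set_scope.

(* The smoothed marginals [(phi (x) rho)_t] evolve as a Markov chain: by Bayes' rule,
   [F phi_t (x) rho_(t+1)] is the image of [phi_t (x) B rho_(t+1)] under the Doob
   transform of the kernel [h(theta; .)] by [rho_(t+1)], and backwards in time the same
   holds for the transposed kernel with the roles of [phi] and [rho] exchanged.  The
   [eps_b] condition sandwiches [h] between [eps_b zeta] and [|O| / eps_b] times a product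
   measure, so each such Doob transform satisfies a Doeblin minorisation with constant
   [c = eps_b^2 zeta / |O|] and contracts total variation by [1 - c].  Replacing [theta]
   by [hat theta] in one step moves the normalised measure by at most
   [max |h_theta - h_(hat theta)| / min h_theta <= z L ||hat theta - theta||], where [L]
   is finite because [h] is [C^1] on the convex compact [Theta].  Unrolling
   [D_(n+1) <= (1 - c) D_n + e] over [t2 - t1] steps gives [(1 - c)^(t2 - t1) + e / c]. *)

Section FiniteMeasures.
Variables (R : realType) (X : finType).

Definition pos_fun (f : X -> R) := forall x, 0 < f x.
Definition nrm (f : X -> R) : X -> R := fun x => f x / \sum_y f y.
Definition tvdist (f g : X -> R) : R := 2^-1 * \sum_x `|f x - g x|.
Definition smooth (f g : X -> R) : X -> R := nrm (fun x => f x * g x).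
Definition fwd (k : X -> X -> R) (mu : X -> R) : X -> R := fun x => \sum_y k y x * mu y.
Definition transp (k : X -> X -> R) : X -> X -> R := fun x y => k y x.
Definition doob_transform (k : X -> X -> R) (w : X -> R) : X -> X -> R :=
  fun y x => k y x * w x / fwd (transp k) w y.
Definition sandwiched (lo hi : R) (g nu : X -> R) (k : X -> X -> R) :=
  forall y x, lo * (g y * nu x) <= k y x <= hi * (g y * nu x).

Lemma sum_gt0 (x0 : X) (f : X -> R) : pos_fun f -> 0 < \sum_x f x.
Proof.
move=> f0; rewrite (bigD1 x0) //= ltr_pwDl //.
by apply: sumr_ge0 => y _; apply: ltW.
Qed.

Lemma sum_nrm (f : X -> R) : \sum_x f x != 0 -> \sum_x nrm f x = 1.
Proof. by move=> f0; rewrite /nrm -mulr_suml mulfV. Qed.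

Lemma nrmZ (f : X -> R) (c : R) : c != 0 -> nrm (fun x => f x * c) = nrm f.
Proof.
move=> c0; apply/funext => x; rewrite /nrm -mulr_suml.
have [->|s0] := eqVneq (\sum_y f y) 0; first by rewrite mul0r !invr0 !mulr0.
by rewrite invfM mulrACA mulfV // mulr1.
Qed.

Lemma smoothC (f g : X -> R) : smooth f g = smooth g f.
Proof. by congr nrm; apply/funext => x; rewrite mulrC. Qed.

Lemma smooth_nrmr (f g : X -> R) : \sum_x g x != 0 -> smooth f (nrm g) = smooth f g.
Proof.
move=> g0; rewrite /smooth -(nrmZ (fun x => f x * g x) (invr_neq0 g0)).
by congr nrm; apply/funext => x; rewrite /nrm mulrA.
Qed.

Lemma smooth_nrml (f g : X -> R) : \sum_x f x != 0 -> smooth (nrm f) g = smooth f g.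
Proof. by move=> f0; rewrite smoothC smooth_nrmr // smoothC. Qed.

Lemma fwd_gt0 (x0 : X) (k : X -> X -> R) (mu : X -> R) :
  (forall y, pos_fun (k y)) -> pos_fun mu -> pos_fun (fwd k mu).
Proof. by move=> k0 mu0 x; apply: (sum_gt0 x0) => y; exact: mulr_gt0 (k0 y x) (mu0 y). Qed.

Lemma smooth_gt0 (x0 : X) (f g : X -> R) : pos_fun f -> pos_fun g -> pos_fun (smooth f g).
Proof.
move=> f0 g0; have fg0 : pos_fun (fun x => f x * g x) by move=> x; rewrite mulr_gt0.
by move=> x; rewrite /smooth /nrm divr_gt0 // (sum_gt0 x0).
Qed.

Lemma sum_smooth (x0 : X) (f g : X -> R) :
  pos_fun f -> pos_fun g -> \sum_x smooth f g x = 1.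
Proof.
by move=> f0 g0; rewrite sum_nrm // gt_eqF // (sum_gt0 x0) // => x; rewrite mulr_gt0.
Qed.

Lemma tvdist_triangle (f g h : X -> R) : tvdist f h <= tvdist f g + tvdist g h.
Proof.
rewrite /tvdist -mulrDr ler_wpM2l // -big_split /=; apply: ler_sum => x _.
by rewrite -(subrKA (g x)) ler_normD.
Qed.

Lemma tvdist_le1 (f g : X -> R) : (forall x, 0 <= f x) -> (forall x, 0 <= g x) ->
  \sum_x f x = 1 -> \sum_x g x = 1 -> tvdist f g <= 1.
Proof.
move=> f0 g0 f1 g1; rewrite /tvdist ler_pdivrMl // mulr1.
apply: le_trans (_ : \sum_x (f x + g x) <= _); last by rewrite big_split /= f1 g1.
by apply: ler_sum => x _; rewrite (le_trans (ler_normB _ _)) // !ger0_norm.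
Qed.

(* Writing [nrm a - nrm a'] as [(a - a') / A + a' (A' - A) / (A A')] and using
   [|A' - A| <= sum |a - a'|] makes the two [2]s cancel. *)
Lemma tvdist_nrm_le (x0 : X) (a a' : X -> R) : pos_fun a -> pos_fun a' ->
  tvdist (nrm a) (nrm a') <= (\sum_x `|a x - a' x|) / \sum_x a x.
Proof.
move=> a0 a'0; have A0 := sum_gt0 x0 a0; have A'0 := sum_gt0 x0 a'0.
set A := \sum_x a x in A0 *; set A' := \sum_x a' x in A'0 *.
have eA : `|A' - A| <= \sum_x `|a x - a' x|.
  rewrite /A /A' -sumrB (le_trans (ler_norm_sum _ _ _)) //.
  by apply: ler_sum => x _; rewrite distrC.
have ediff x : nrm a x - nrm a' x = (a x - a' x) / A + a' x * ((A' - A) / (A * A')).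
  by rewrite /nrm -/A -/A'; field; rewrite ?gt_eqF.
rewrite /tvdist mulrC ler_pdivrMr //.
apply: le_trans (_ : \sum_x (`|a x - a' x| / A + a' x * (`|A' - A| / (A * A'))) <= _).
  apply: ler_sum => x _; rewrite ediff (le_trans (ler_normD _ _)) //.
  rewrite !normrM !normfV (gtr0_norm A0) (gtr0_norm (a'0 x)).
  by rewrite (gtr0_norm (mulr_gt0 A0 A'0)).
rewrite big_split /= -!mulr_suml -/A'.
have -> : A' * (`|A' - A| / (A * A')) = `|A' - A| / A by field; rewrite ?gt_eqF.
by rewrite mulr_natr mulr2n lerD2l ler_pM2r ?invr_gt0.
Qed.

(* Dobrushin's contraction: subtract the common part [c * lam] from every row of [K]. *)
Lemma tvdist_fwd_contract (K : X -> X -> R) (lam : X -> R) (c : R) (m m' : X -> R) :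
  (forall y x, c * lam x <= K y x) -> (forall y, \sum_x K y x = 1) ->
  \sum_x lam x = 1 -> \sum_x m x = \sum_x m' x ->
  tvdist (fwd K m) (fwd K m') <= (1 - c) * tvdist m m'.
Proof.
move=> Klam K1 lam1 mm'.
have ediff x : fwd K m x - fwd K m' x = \sum_y (K y x - c * lam x) * (m y - m' y).
  have -> : \sum_y (K y x - c * lam x) * (m y - m' y)
          = \sum_y K y x * (m y - m' y) - c * lam x * \sum_y (m y - m' y).
    by rewrite mulr_sumr -sumrB; apply: eq_bigr => y _; rewrite mulrBl.
  by rewrite sumrB mm' subrr mulr0 subr0 /fwd -sumrB; apply: eq_bigr => y _; rewrite mulrBr.
rewrite /tvdist mulrCA ler_wpM2l // mulr_sumr.
apply: le_trans (_ : \sum_x \sum_y (K y x - c * lam x) * `|m y - m' y| <= _).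
  apply: ler_sum => x _; rewrite ediff (le_trans (ler_norm_sum _ _ _)) //.
  by apply: ler_sum => y _; rewrite normrM ger0_norm // subr_ge0.
rewrite exchange_big /=; apply: ler_sum => y _.
by rewrite -mulr_suml sumrB K1 -mulr_sumr lam1 mulr1.
Qed.

Lemma sandwiched_gt0 (lo hi : R) (g nu : X -> R) (k : X -> X -> R) :
  0 < lo -> pos_fun g -> pos_fun nu -> sandwiched lo hi g nu k -> forall y, pos_fun (k y).
Proof.
move=> lo0 g0 nu0 kb y x; have /andP[+ _] := kb y x.
by apply: lt_le_trans; rewrite !mulr_gt0.
Qed.

Lemma sandwiched_le (x0 : X) (lo hi : R) (g nu : X -> R) (k : X -> X -> R) :
  pos_fun g -> pos_fun nu -> sandwiched lo hi g nu k -> lo <= hi.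
Proof.
move=> g0 nu0 kb; have /andP[lok khi] := kb x0 x0.
by rewrite -(ler_pM2r (mulr_gt0 (g0 x0) (nu0 x0))) (le_trans lok).
Qed.

Lemma sandwichedT (lo hi : R) (g nu : X -> R) (k : X -> X -> R) :
  sandwiched lo hi g nu k -> sandwiched lo hi nu g (transp k).
Proof. by move=> kb y x; rewrite /transp [nu y * _]mulrC; apply: kb. Qed.

Section DoobTransform.
Variables (x0 : X) (k : X -> X -> R) (w : X -> R).
Hypotheses (k_gt0 : forall y, pos_fun (k y)) (w_gt0 : pos_fun w).

Let beta_gt0 : pos_fun (fwd (transp k) w).
Proof. exact: (fwd_gt0 x0 (fun y x => k_gt0 x y) w_gt0). Qed.

Lemma doob_transform_stochastic y : \sum_x doob_transform k w y x = 1.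
Proof. by rewrite -mulr_suml mulfV // gt_eqF // beta_gt0. Qed.

Lemma doob_transform_minorized (lo hi : R) (g nu : X -> R) :
  0 < lo -> pos_fun g -> pos_fun nu -> sandwiched lo hi g nu k ->
  forall y x, lo / hi * smooth nu w x <= doob_transform k w y x.
Proof.
move=> lo0 g0 nu0 kb y x.
have hi0 : 0 < hi by rewrite (lt_le_trans lo0) // (sandwiched_le x0 g0 nu0 kb).
have S0 : 0 < \sum_z nu z * w z by apply: (sum_gt0 x0) => z; rewrite mulr_gt0.
have beta_le : fwd (transp k) w y <= hi * g y * \sum_z nu z * w z.
  rewrite mulr_sumr; apply: ler_sum => z _; rewrite /transp mulrA -(mulrA hi) ler_pM2r //.
  by have /andP[] := kb y z.
have -> : lo / hi * smooth nu w x = lo * (g y * nu x) * w x / (hi * g y * \sum_z nu z * w z).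
  by rewrite /smooth /nrm; field; rewrite !gt_eqF.
have hgS0 : 0 < hi * g y * \sum_z nu z * w z by rewrite !mulr_gt0.
apply: le_trans (_ : k y x * w x / (hi * g y * \sum_z nu z * w z) <= _).
  by rewrite ler_pM2r ?invr_gt0 // ler_pM2r //; have /andP[] := kb y x.
rewrite /doob_transform ler_pM2l; last exact: mulr_gt0 (k_gt0 y x) (w_gt0 x).
by rewrite lef_pV2 ?posrE ?beta_gt0.
Qed.

Lemma smooth_fwd (mu : X -> R) : pos_fun mu ->
  smooth (fwd k mu) w = fwd (doob_transform k w) (smooth mu (fwd (transp k) w)).
Proof.
move=> mu0.
have eZ : \sum_x fwd k mu x * w x = \sum_y mu y * fwd (transp k) w y.
  rewrite /fwd /transp; under eq_bigr do rewrite mulr_suml.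
  rewrite exchange_big /=; apply: eq_bigr => y _; rewrite mulr_sumr.
  by apply: eq_bigr => x _; rewrite mulrAC mulrC.
have Z0 : 0 < \sum_y mu y * fwd (transp k) w y.
  by apply: (sum_gt0 x0) => y; rewrite mulr_gt0 ?beta_gt0.
apply/funext => x; rewrite /smooth /nrm eZ {1}/fwd !mulr_suml.
apply: eq_bigr => y _; rewrite /doob_transform.
by field; rewrite !gt_eqF ?beta_gt0.
Qed.

End DoobTransform.

Lemma smooth_fwd_contract (x0 : X) (lo hi : R) (g nu : X -> R) (k : X -> X -> R)
    (w mu mu' : X -> R) :
  0 < lo -> pos_fun g -> pos_fun nu -> sandwiched lo hi g nu k ->
  pos_fun w -> pos_fun mu -> pos_fun mu' ->
  tvdist (smooth (fwd k mu) w) (smooth (fwd k mu') w)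
  <= (1 - lo / hi) * tvdist (smooth mu (fwd (transp k) w)) (smooth mu' (fwd (transp k) w)).
Proof.
move=> lo0 g0 nu0 kb w0 mu0 mu'0.
have k0 := sandwiched_gt0 lo0 g0 nu0 kb.
have beta0 : pos_fun (fwd (transp k) w) := fwd_gt0 x0 (fun y x => k0 x y) w0.
rewrite !(smooth_fwd x0 k0 w0) //.
apply: tvdist_fwd_contract (doob_transform_minorized x0 k0 w0 lo0 g0 nu0 kb) _ _ _.
- exact: doob_transform_stochastic.
- exact: sum_smooth.
- by rewrite !(sum_smooth x0).
Qed.

Lemma smooth_fwd_perturb (x0 : X) (k k' : X -> X -> R) (E m : R) (w mu : X -> R) :
  0 < m -> (forall y x, m <= k y x) -> (forall y, pos_fun (k' y)) ->
  (forall y x, `|k y x - k' y x| <= E) -> pos_fun w -> pos_fun mu ->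
  tvdist (smooth (fwd k mu) w) (smooth (fwd k' mu) w) <= E / m.
Proof.
move=> m0 mk k'0 kE w0 mu0.
have k0 y : pos_fun (k y) by move=> x; apply: lt_le_trans (mk y x).
have a0 kk : (forall y, pos_fun (kk y)) -> pos_fun (fun x => fwd kk mu x * w x).
  by move=> kk0 x; rewrite mulr_gt0 // (fwd_gt0 x0).
set T := \sum_x \sum_y mu y * w x.
have num : \sum_x `|fwd k mu x * w x - fwd k' mu x * w x| <= E * T.
  rewrite /T mulr_sumr; apply: ler_sum => x _.
  rewrite -mulrBl normrM (gtr0_norm (w0 x)) /fwd -sumrB.
  apply: le_trans (ler_wpM2r (ltW (w0 x)) (ler_norm_sum _ _ _)) _.
  rewrite mulr_suml mulr_sumr; apply: ler_sum => y _.
  by rewrite -mulrBl normrM (gtr0_norm (mu0 y)) mulrA !ler_pM2r.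
have den : m * T <= \sum_x fwd k mu x * w x.
  rewrite /T mulr_sumr; apply: ler_sum => x _; rewrite /fwd mulr_sumr mulr_suml.
  by apply: ler_sum => y _; rewrite mulrA !ler_pM2r.
apply: le_trans (tvdist_nrm_le x0 (a0 _ k0) (a0 _ k'0)) _.
rewrite ler_pdivrMr ?(sum_gt0 x0 (a0 _ k0)) // (le_trans num) //.
have E0 : 0 <= E := le_trans (normr_ge0 _) (kE x0 x0).
apply: le_trans (_ : E / m * (m * T) <= _); first by rewrite mulrA divfK ?gt_eqF.
by rewrite ler_wpM2l // divr_ge0 // ltW.
Qed.

Lemma tvdist_smooth_le1 (x0 : X) (f g f' g' : X -> R) :
  pos_fun f -> pos_fun g -> pos_fun f' -> pos_fun g' ->
  tvdist (smooth f g) (smooth f' g') <= 1.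
Proof.
move=> f0 g0 f'0 g'0; apply: tvdist_le1; rewrite ?(sum_smooth x0) // => x.
  exact/ltW/smooth_gt0.
exact/ltW/smooth_gt0.
Qed.

End FiniteMeasures.

Lemma geometric_recursion (R : realType) (D : nat -> R) (c e : R) (N : nat) :
  0 < c <= 1 -> 0 <= e -> D 0%N <= 1 ->
  (forall n, (n < N)%N -> D n.+1 <= (1 - c) * D n + e) ->
  forall n, (n <= N)%N -> D n <= (1 - c) ^+ n + e / c.
Proof.
move=> /andP[c0 c1] e0 D0 DS; elim=> [|n IH] nN.
  by rewrite expr0 (le_trans D0) // lerDl divr_ge0 // ltW.
apply: le_trans (DS n nN) _.
have -> : (1 - c) ^+ n.+1 + e / c = (1 - c) * ((1 - c) ^+ n + e / c) + e.
  by rewrite exprS; field; rewrite gt_eqF.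
by rewrite lerD2r ler_wpM2l ?subr_ge0 // IH // ltnW.
Qed.

Section SmoothingStability.
Variables (R : realType) (X : finType) (x0 : X).
Variables (lo hi E e : R) (m : int -> R) (nu nu' : int -> X -> R) (k k' : int -> X -> X -> R).
Variables (t1 t2 : int) (phi phi' rho rho' : int -> X -> R).
Hypotheses (lo_gt0 : 0 < lo) (nu_gt0 : forall t, pos_fun (nu t))
  (nu'_gt0 : forall t, pos_fun (nu' t)).
Hypothesis k_sandwiched : forall t, sandwiched lo hi (fun=> 1) (nu t) (k t).
Hypothesis k'_sandwiched : forall t, sandwiched lo hi (fun=> 1) (nu' t) (k' t).
Hypotheses (m_gt0 : forall t, 0 < m t) (m_le_k : forall t y x, m t <= k t y x).
Hypothesis k_k'_close : forall t y x, `|k t y x - k' t y x| <= E.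
Hypothesis e_ge : forall t, E / m t <= e.
Hypothesis t12 : t1 <= t2.
Hypotheses (phi_gt0 : forall t, t1 <= t <= t2 -> pos_fun (phi t))
  (phi'_gt0 : forall t, t1 <= t <= t2 -> pos_fun (phi' t))
  (rho_gt0 : forall t, t1 <= t <= t2 -> pos_fun (rho t))
  (rho'_gt0 : forall t, t1 <= t <= t2 -> pos_fun (rho' t)).
Hypotheses
  (phi_fwd : forall t, t1 < t <= t2 -> phi t = nrm (fwd (k t) (phi (t - 1))))
  (phi'_fwd : forall t, t1 < t <= t2 -> phi' t = nrm (fwd (k' t) (phi' (t - 1))))
  (rho_bwd : forall t, t1 <= t < t2 -> rho t = nrm (fwd (transp (k (t + 1))) (rho (t + 1))))
  (rho'_bwd : forall t, t1 <= t < t2 ->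
     rho' t = nrm (fwd (transp (k' (t + 1))) (rho' (t + 1)))).

Let one_gt0 : pos_fun (fun _ : X => 1 : R).
Proof. by move=> x; apply: ltr01. Qed.

Let k_gt0 t : forall y, pos_fun (k t y).
Proof. exact: sandwiched_gt0 lo_gt0 one_gt0 (nu_gt0 t) (k_sandwiched t). Qed.

Let k'_gt0 t : forall y, pos_fun (k' t y).
Proof. exact: sandwiched_gt0 lo_gt0 one_gt0 (nu'_gt0 t) (k'_sandwiched t). Qed.

Let sum_fwd_neq0 (kk : X -> X -> R) (mu : X -> R) :
  (forall y, pos_fun (kk y)) -> pos_fun mu -> \sum_x fwd kk mu x != 0.
Proof. by move=> kk0 mu0; rewrite gt_eqF // (sum_gt0 x0 (fwd_gt0 x0 kk0 mu0)). Qed.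

Lemma forward_step t : t1 <= t < t2 ->
  tvdist (smooth (phi (t + 1)) (rho (t + 1))) (smooth (phi' (t + 1)) (rho (t + 1)))
  <= (1 - lo / hi) * tvdist (smooth (phi t) (rho t)) (smooth (phi' t) (rho t)) + e.
Proof.
move=> tI; have tI' : t1 <= t <= t2 by lia.
have t1I : t1 <= t + 1 <= t2 by lia.
have t1I' : t1 < t + 1 <= t2 by lia.
have phi0 := phi_gt0 tI'; have phi'0 := phi'_gt0 tI'; have rho0 := rho_gt0 t1I.
have k0 := k_gt0 (t + 1); have k'0 := k'_gt0 (t + 1).
have kT0 : forall y, pos_fun (transp (k (t + 1)) y) by move=> y x; apply: k0.
rewrite (phi_fwd t1I') (phi'_fwd t1I') (rho_bwd tI) addrK.
rewrite !smooth_nrml ?sum_fwd_neq0 // !smooth_nrmr ?sum_fwd_neq0 //.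
apply: le_trans (tvdist_triangle _ (smooth (fwd (k (t + 1)) (phi' t)) (rho (t + 1))) _) _.
apply: lerD.
  exact (smooth_fwd_contract x0 lo_gt0 one_gt0 (nu_gt0 (t + 1)) (k_sandwiched (t + 1))
    rho0 phi0 phi'0).
apply: le_trans (e_ge (t + 1)).
exact (smooth_fwd_perturb x0 (m_gt0 (t + 1)) (m_le_k (t + 1)) k'0 (k_k'_close (t + 1)) rho0 phi'0).
Qed.

Lemma backward_step t : t1 <= t < t2 ->
  tvdist (smooth (phi' t) (rho t)) (smooth (phi' t) (rho' t))
  <= (1 - lo / hi) *
     tvdist (smooth (phi' (t + 1)) (rho (t + 1))) (smooth (phi' (t + 1)) (rho' (t + 1))) + e.
Proof.
move=> tI; have tI' : t1 <= t <= t2 by lia.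
have t1I : t1 <= t + 1 <= t2 by lia.
have t1I' : t1 < t + 1 <= t2 by lia.
have phi'0 := phi'_gt0 tI'; have rho0 := rho_gt0 t1I; have rho'0 := rho'_gt0 t1I.
have k'0 := k'_gt0 (t + 1).
have kT0 : forall y, pos_fun (transp (k (t + 1)) y) by move=> y x; apply: k_gt0.
have k'T0 : forall y, pos_fun (transp (k' (t + 1)) y) by move=> y x; apply: k'0.
rewrite (phi'_fwd t1I') (rho_bwd tI) (rho'_bwd tI) addrK.
rewrite !smooth_nrmr ?sum_fwd_neq0 // !smooth_nrml ?sum_fwd_neq0 //.
rewrite ![smooth (phi' t) _]smoothC ![smooth (fwd (k' (t + 1)) (phi' t)) _]smoothC [leRHS]addrC.
apply: le_trans (tvdist_triangle _ (smooth (fwd (transp (k' (t + 1))) (rho (t + 1))) (phi' t)) _) _.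
apply: lerD.
  apply: le_trans (e_ge (t + 1)).
  exact (smooth_fwd_perturb x0 (m_gt0 (t + 1)) (fun y x => m_le_k (t + 1) x y) k'T0
    (fun y x => k_k'_close (t + 1) x y) phi'0 rho0).
exact (smooth_fwd_contract x0 lo_gt0 (nu'_gt0 (t + 1)) one_gt0
  (sandwichedT (k'_sandwiched (t + 1))) phi'0 rho0 rho'0).
Qed.

Theorem smoothing_stability :
  tvdist (smooth (phi t2) (rho t2)) (smooth (phi' t2) (rho t2))
    <= (1 - lo / hi) ^+ `|t2 - t1|%N + e / (lo / hi) /\
  tvdist (smooth (phi' t1) (rho t1)) (smooth (phi' t1) (rho' t1))
    <= (1 - lo / hi) ^+ `|t2 - t1|%N + e / (lo / hi).
Proof.
have c01 : 0 < lo / hi <= 1.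
  have lohi := sandwiched_le x0 one_gt0 (nu_gt0 0) (k_sandwiched 0).
  by rewrite divr_gt0 ?ler_pdivrMr ?mul1r ?(lt_le_trans lo_gt0).
have e0 : 0 <= e.
  have E0 : 0 <= E := le_trans (normr_ge0 _) (k_k'_close 0 x0 x0).
  exact: le_trans (divr_ge0 E0 (ltW (m_gt0 0))) (e_ge 0).
set N := `|t2 - t1|%N.
have t1N : t1 + N%:Z = t2 by rewrite /N; lia.
have t2N : t2 - N%:Z = t1 by rewrite /N; lia.
split.
  pose D n := tvdist (smooth (phi (t1 + n%:Z)) (rho (t1 + n%:Z)))
                     (smooth (phi' (t1 + n%:Z)) (rho (t1 + n%:Z))).
  have D0 : D 0%N <= 1.
    have I1 : t1 <= t1 <= t2 by lia.
    rewrite /D addr0.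
    exact (tvdist_smooth_le1 x0 (phi_gt0 I1) (rho_gt0 I1) (phi'_gt0 I1) (rho_gt0 I1)).
  have DS n : (n < N)%N -> D n.+1 <= (1 - lo / hi) * D n + e.
    move=> ltnN; rewrite /D (_ : t1 + n.+1%:Z = t1 + n%:Z + 1); last by lia.
    by apply: forward_step; lia.
  by have := geometric_recursion c01 e0 D0 DS (leqnn N); rewrite /D t1N.
pose D n := tvdist (smooth (phi' (t2 - n%:Z)) (rho (t2 - n%:Z)))
                   (smooth (phi' (t2 - n%:Z)) (rho' (t2 - n%:Z))).
have D0 : D 0%N <= 1.
  have I2 : t1 <= t2 <= t2 by lia.
  rewrite /D subr0.
  exact (tvdist_smooth_le1 x0 (phi'_gt0 I2) (rho_gt0 I2) (phi'_gt0 I2) (rho'_gt0 I2)).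
have DS n : (n < N)%N -> D n.+1 <= (1 - lo / hi) * D n + e.
  move=> ltnN; rewrite /D (_ : t2 - n%:Z = t2 - n.+1%:Z + 1); last by lia.
  by apply: backward_step; lia.
by have := geometric_recursion c01 e0 D0 DS (leqnn N); rewrite /D t2N.
Qed.

End SmoothingStability.

Section LipschitzC1.
Variables (R : realType) (n : nat).

Lemma compact_continuous_bounded (T : set 'rV[R]_n) (g : 'rV[R]_n -> R) :
  compact T -> (forall x, T x -> {for x, continuous g}) ->
  exists M, 0 <= M /\ forall x, T x -> `|g x| <= M.
Proof.
move=> cT cg.
have wc : {within T, continuous g}.
  by apply: continuous_in_subspaceT => x; rewrite inE => Tx; apply: cg.
have [M0 [_ hM]] := compact_bounded (continuous_compact wc cT).
exists (`|M0| + 1); split; first by rewrite addr_ge0.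
move=> x Tx; apply: hM; last by exists x.
by rewrite (le_lt_trans (ler_norm M0)) // ltrDl.
Qed.

Lemma is_derive_along_line (f : 'rV[R]_n -> R) (y v : 'rV[R]_n) (t : R) :
  differentiable f (y + t *: v) ->
  is_derive t 1 (fun s : R => f (y + s *: v)) ('D_v f (y + t *: v)).
Proof.
move=> df.
have e : (fun h : R => h^-1 *: (((fun s : R => f (y + s *: v)) \o shift t) (h *: 1)
                                - f (y + t *: v))) =
         (fun h : R => h^-1 *: ((f \o shift (y + t *: v)) (h *: v) - f (y + t *: v))).
  apply/funext => h /=; congr (_ *: (f _ - _)).
  by rewrite scaler1 scalerDl addrCA addrC.
have d1 : derivable (fun s : R => f (y + s *: v)) t 1.
  by rewrite /derivable e; apply: diff_derivable.
have d2 : 'D_1 (fun s : R => f (y + s *: v)) t = 'D_v f (y + t *: v).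
  by rewrite /derive e.
by rewrite -d2; apply: derivableP.
Qed.

Lemma derive_sum_partials (f : 'rV[R]_n -> R) (z v : 'rV[R]_n) : differentiable f z ->
  'D_v f z = \sum_(i < n) v 0 i * derive f z (delta_mx 0 i).
Proof.
move=> df; rewrite deriveE // {1}(row_sum_delta v) linear_sum.
by apply: eq_bigr => i _; rewrite linearZ /= deriveE.
Qed.

Lemma sqnorm_ge0 (v : 'rV[R]_n) : 0 <= sqnorm v.
Proof. by rewrite /sqnorm sumr_ge0 // => j _; rewrite sqr_ge0. Qed.

Lemma abs_le_sqrt_sqnorm (v : 'rV[R]_n) i : `|v 0 i| <= Num.sqrt (sqnorm v).
Proof.
rewrite -sqrtr_sqr ler_sqrt ?sqnorm_ge0 //.
by rewrite /sqnorm (bigD1 i) //= lerDl sumr_ge0 // => j _; rewrite sqr_ge0.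
Qed.

Lemma mvt_segment (T : set 'rV[R]_n) (f : 'rV[R]_n -> R) (x y : 'rV[R]_n) :
  convex_rV T -> T x -> T y -> (forall z, T z -> differentiable f z) ->
  exists2 c : R, 0 < c < 1 & f x - f y = 'D_(x - y) f (y + c *: (x - y)).
Proof.
move=> cvT Tx Ty dT; set v := x - y.
have seg (t : R) : 0 <= t <= 1 -> T (y + t *: v).
  move=> /andP[t0 t1]; suff -> : y + t *: v = t *: x + (1 - t) *: y by apply: cvT.
  by rewrite /v scalerBr scalerBl scale1r addrCA.
have hder (t : R) : 0 <= t <= 1 ->
    is_derive t 1 (fun s : R => f (y + s *: v)) ('D_v f (y + t *: v)).
  by move=> ht; apply/is_derive_along_line/dT/seg.
have [c c01 hc] : exists2 c : R, c \in `]0, 1[%R &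
    f (y + 1 *: v) - f (y + 0 *: v) = 'D_v f (y + c *: v) * (1 - 0).
  apply: (@MVT R (fun s : R => f (y + s *: v)) (fun s => 'D_v f (y + s *: v)) 0 1 ltr01).
    by move=> s; rewrite in_itv /= => /andP[s0 s1]; apply: hder; rewrite !ltW.
  apply: continuous_in_subspaceT => s; rewrite inE /= in_itv /= => /hder[d1 _].
  exact/differentiable_continuous/derivable1_diffP.
move: c01 hc; rewrite in_itv /= => c01; exists c => //.
by move: hc; rewrite scale1r scale0r addr0 subr0 mulr1 /v addrCA subrr addr0.
Qed.

Lemma C1_lipschitz_on_convex_compact (U T : set 'rV[R]_n) (f : 'rV[R]_n -> R) :
  C1_on U f -> T `<=` U -> convex_rV T -> compact T ->
  exists L, 0 <= L /\ forall x y, T x -> T y ->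
    `|f x - f y| <= L * Num.sqrt (sqnorm (x - y)).
Proof.
move=> [dU cU] TU cvT cT.
have [M hM] := choice (fun i : 'I_n =>
  compact_continuous_bounded cT (fun x Tx => cU i x (TU x Tx))).
exists (\sum_i M i); split; first by apply: sumr_ge0 => i _; case: (hM i).
move=> x y Tx Ty.
have [c /andP[c0 c1] ->] := mvt_segment cvT Tx Ty (fun z Tz => dU z (TU z Tz)).
have Tc : T (y + c *: (x - y)).
  have -> : y + c *: (x - y) = c *: x + (1 - c) *: y.
    by rewrite scalerBr scalerBl scale1r addrCA.
  by apply: cvT; rewrite ?ltW ?subr_ge0.
rewrite derive_sum_partials; last exact/dU/TU.
rewrite (le_trans (ler_norm_sum _ _ _)) // mulr_suml; apply: ler_sum => i _.
rewrite normrM mulrC ler_pM ?abs_le_sqrt_sqnorm //.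
by case: (hM i) => _ /(_ _ Tc).
Qed.

Lemma C1_family_lipschitz (I : finType) (U T : set 'rV[R]_n) (f : I -> 'rV[R]_n -> R) :
  (forall i, C1_on U (f i)) -> T `<=` U -> convex_rV T -> compact T ->
  exists L, 0 <= L /\ forall i x y, T x -> T y ->
    `|f i x - f i y| <= L * Num.sqrt (sqnorm (x - y)).
Proof.
move=> c1f TU cvT cT.
have [L hL] := choice (fun i => C1_lipschitz_on_convex_compact (c1f i) TU cvT cT).
exists (\sum_i L i); split; first by apply: sumr_ge0 => i _; case: (hL i).
move=> i x y Tx Ty; have [_ /(_ x y Tx Ty) Lxy] := hL i.
rewrite (le_trans Lxy) // ler_wpM2r ?sqrtr_ge0 // (bigD1 i) //= lerDl.
by apply: sumr_ge0 => j _; case: (hL j).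
Qed.

End LipschitzC1.

Lemma distr_le1 (R : realType) (T : finType) (f : T -> R) x : is_distr f -> f x <= 1.
Proof. by move=> [f0 <-]; rewrite (bigD1 x) //= lerDl sumr_ge0. Qed.

Lemma dist_mul3_le (R : realType) (a a' b b' c c' : R) :
  0 <= a <= 1 -> 0 <= a' <= 1 -> 0 <= b <= 1 -> 0 <= b' <= 1 -> 0 <= c <= 1 -> 0 <= c' <= 1 ->
  `|a * b * c - a' * b' * c'| <= `|a - a'| + `|b - b'| + `|c - c'|.
Proof.
move=> /andP[a0 a1] /andP[a'0 a'1] /andP[b0 b1] /andP[b'0 b'1] /andP[c0 c1] /andP[c'0 c'1].
have -> : a * b * c - a' * b' * c'
        = (a - a') * (b * c) + (a' * c) * (b - b') + (a' * b') * (c - c') by ring.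
rewrite (le_trans (ler_normD _ _)) // lerD //; last first.
  by rewrite normrM ger0_norm ?mulr_ge0 // ler_piMl // mulr_ile1.
rewrite (le_trans (ler_normD _ _)) // lerD //.
  by rewrite normrM (ger0_norm (mulr_ge0 b0 c0)) ler_piMr // mulr_ile1.
by rewrite normrM ger0_norm ?mulr_ge0 // ler_piMl // mulr_ile1.
Qed.

Section ParamDistance.
Variables (R : realType) (nh nl nb : nat).

Lemma dist2_ge0 (x y : param R nh nl nb) : 0 <= dist2 x y.
Proof. exact: sqrtr_ge0. Qed.

Lemma dist2xx (x : param R nh nl nb) : dist2 x x = 0.
Proof.
have sq0 n (v : 'rV[R]_n) : sqnorm (v - v) = 0.
  by rewrite /sqnorm big1 // => i _; rewrite subrr mxE expr0n.
by rewrite /dist2 !sq0 !addr0 sqrtr0.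
Qed.

Lemma dist2_ge_components (x y : param R nh nl nb) :
  [/\ Num.sqrt (sqnorm (x.1.1 - y.1.1)) <= dist2 x y,
      Num.sqrt (sqnorm (x.1.2 - y.1.2)) <= dist2 x y &
      Num.sqrt (sqnorm (x.2 - y.2)) <= dist2 x y].
Proof.
have := sqnorm_ge0 (x.1.1 - y.1.1); have := sqnorm_ge0 (x.1.2 - y.1.2).
have := sqnorm_ge0 (x.2 - y.2).
by split; rewrite /dist2 ler_sqrt ?addr_ge0 //; lra.
Qed.

End ParamDistance.

Lemma cardO_ge1 (R : realType) (O : finType) (o : O) : 1 <= cardO R O.
Proof. by rewrite /cardO (_ : 1 = 1%:R) // ler_nat; apply/card_gt0P; exists o. Qed.

Section PolicyRegularity.
Variables (R : realType) (S A O : finType) (nh nl nb : nat).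
Variables (Th : set 'rV[R]_nh) (Tl : set 'rV[R]_nl) (Tb : set 'rV[R]_nb)
  (Uh : set 'rV[R]_nh) (Ul : set 'rV[R]_nl) (Ub : set 'rV[R]_nb).
Variables (pihi : 'rV[R]_nh -> S -> O -> R) (pilo : 'rV[R]_nl -> S -> O -> A -> R)
  (pib : 'rV[R]_nb -> S -> O -> bool -> R) (zeta : R).
Hypotheses (subh : Th `<=` Uh) (subl : Tl `<=` Ul) (subb : Tb `<=` Ub).
Hypotheses (zeta_gt0 : 0 < zeta) (zeta_lt1 : zeta < 1).

Local Notation h := (hfun pihi pilo pib zeta).
Local Notation Theta := (inTheta Th Tl Tb).

Section Positivity.
Hypotheses (poshi : forall x s o, Uh x -> 0 < pihi x s o)
  (poslo : forall x s o a, Ul x -> 0 < pilo x s o a)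
  (posb : forall x s o b, Ub x -> 0 < pib x s o b).

Lemma pihibar_gt0 x s o' b o : Th x -> 0 < pihibar pihi zeta x s o' b o.
Proof.
move=> Tx; rewrite /pihibar; case: b; first exact/poshi/subh.
have zO : 0 < zeta / cardO R O by rewrite divr_gt0 // (lt_le_trans ltr01) // cardO_ge1.
by case: eqP => _ //; rewrite addr_gt0 // subr_gt0.
Qed.

Lemma hfun_gt0 th : Theta th -> forall o' s a o b, 0 < h th o' s a o b.
Proof.
case=> [Tx [Ty Tz]] o' s a o b.
by rewrite /hfun !mulr_gt0 ?pihibar_gt0 //; [apply/posb/subb | apply/poslo/subl].
Qed.

End Positivity.

Section Lipschitz.
Hypotheses (cvxh : convex_rV Th) (cvxl : convex_rV Tl) (cvxb : convex_rV Tb)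
  (cpth : compact Th) (cptl : compact Tl) (cptb : compact Tb).
Hypotheses (dhi : forall x s, Uh x -> is_distr (pihi x s))
  (dlo : forall x s o, Ul x -> is_distr (pilo x s o))
  (db : forall x s o, Ub x -> is_distr (pib x s o)).
Hypotheses (c1hi : forall s o, C1_on Uh (fun x => pihi x s o))
  (c1lo : forall s o a, C1_on Ul (fun x => pilo x s o a))
  (c1b : forall s o b, C1_on Ub (fun x => pib x s o b)).

Lemma pihibar_in01 x s o' b o : Th x -> 0 <= pihibar pihi zeta x s o' b o <= 1.
Proof.
move=> Tx; rewrite /pihibar; case: b.
  by have dx := dhi s (subh Tx); rewrite dx.1 distr_le1.
have zO : 0 <= zeta / cardO R O by rewrite divr_ge0 ?ltW // (lt_le_trans ltr01) // cardO_ge1.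
have zOz : zeta / cardO R O <= zeta.
  by rewrite ler_pdivrMr ?(lt_le_trans ltr01) ?cardO_ge1 // ler_peMr ?cardO_ge1 ?ltW.
have z1 := zeta_lt1; set q := zeta / cardO R O in zO zOz *.
case: eqP => _; apply/andP; split; lra.
Qed.

(* Each of the three factors of [h] is [C^1], hence Lipschitz on the convex compact
   [Theta], and takes values in [0, 1]. *)
Lemma hfun_lipschitz : exists L, 0 <= L /\ forall o' s a o b (x y : param R nh nl nb),
  Theta x -> Theta y -> `|h x o' s a o b - h y o' s a o b| <= L * dist2 x y.
Proof.
have [Lb [Lb0 hLb]] := C1_family_lipschitz (f := fun q x => pib x q.1.1 q.1.2 q.2)
  (fun q => c1b q.1.1 q.1.2 q.2) subb cvxb cptb.
have [Lh [Lh0 hLh]] := C1_family_lipschitz (f := fun q x => pihi x q.1 q.2)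
  (fun q => c1hi q.1 q.2) subh cvxh cpth.
have [Ll [Ll0 hLl]] := C1_family_lipschitz (f := fun q x => pilo x q.1.1 q.1.2 q.2)
  (fun q => c1lo q.1.1 q.1.2 q.2) subl cvxl cptl.
exists (Lb + Lh + Ll); split; first by rewrite !addr_ge0.
move=> o' s a o b x y [xh [xl xb]] [yh [yl yb]].
have [d1 d2 d3] := dist2_ge_components x y.
have pb01 z : Tb z -> 0 <= pib z s o' b <= 1.
  by move=> Tz; have dz := db s o' (subb Tz); rewrite dz.1 distr_le1.
have pl01 z : Tl z -> 0 <= pilo z s o a <= 1.
  by move=> Tz; have dz := dlo s o (subl Tz); rewrite dz.1 distr_le1.
rewrite /hfun (le_trans (dist_mul3_le (pb01 _ xb) (pb01 _ yb) (pihibar_in01 s o' b o xh)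
  (pihibar_in01 s o' b o yh) (pl01 _ xl) (pl01 _ yl))) //.
rewrite !mulrDl !lerD //.
- by rewrite (le_trans (hLb (s, o', b) _ _ xb yb)) // ler_wpM2l.
- rewrite /pihibar; case: (b) => /=; last by rewrite subrr normr0 mulr_ge0 ?dist2_ge0.
  by rewrite (le_trans (hLh (s, o) _ _ xh yh)) // ler_wpM2l.
- by rewrite (le_trans (hLl (s, o, a) _ _ xl yl)) // ler_wpM2l.
Qed.

End Lipschitz.

End PolicyRegularity.

Section PolicyKernels.
Variables (R : realType) (S A O : finType) (nh nl nb : nat).
Variables (Th : set 'rV[R]_nh) (Tl : set 'rV[R]_nl) (Tb : set 'rV[R]_nb).
Variables (pihi : 'rV[R]_nh -> S -> O -> R) (pilo : 'rV[R]_nl -> S -> O -> A -> R)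
  (pib : 'rV[R]_nb -> S -> O -> bool -> R) (zeta : R) (sq : int -> S) (aq : int -> A).

Local Notation h := (hfun pihi pilo pib zeta).
Local Notation Theta := (inTheta Th Tl Tb).
Local Notation param := (param R nh nl nb).

Definition meas_fun (f : meas R O) : O * bool -> R := fun x => f x.1 x.2.

(* The transition kernel at time [t], from [(o_{t-1}, b_{t-1})] to [(o_t, b_t)];
   it does not depend on [b_{t-1}]. *)
Definition kern (th : param) (t : int) : O * bool -> O * bool -> R :=
  fun y x => h th y.1 (sq t) (aq t) x.1 x.2.

Lemma tv_otimesE (f g f' g' : meas R O) :
  tv (otimes f g) (otimes f' g')
  = tvdist (smooth (meas_fun f) (meas_fun g)) (smooth (meas_fun f') (meas_fun g')).
Proof. by []. Qed.

Lemma Fop_meas_fun th t (f g : meas R O) :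
  (forall o b, Fop pihi pilo pib zeta sq aq th t f o b = g o b) ->
  meas_fun g = nrm (fwd (kern th t) (meas_fun f)).
Proof. by move=> fg; apply/funext => -[u b]; rewrite /meas_fun -fg. Qed.

Lemma Bop_meas_fun th t (f g : meas R O) :
  (forall o b, Bop pihi pilo pib zeta sq aq th t f o b = g o b) ->
  meas_fun g = nrm (fwd (transp (kern th (t + 1))) (meas_fun f)).
Proof. by move=> fg; apply/funext => -[u b]; rewrite /meas_fun -fg. Qed.

Lemma strict_prob_gt0 (f : meas R O) : strict_prob f -> pos_fun (meas_fun f).
Proof. by case=> f0 _ x; apply: f0. Qed.

Lemma strict_prob_card_gt0 (f : meas R O) : strict_prob f -> (0 < #|O|)%N.
Proof.
case=> _ f1; case: (pickP (fun o : O => true)) => [x _|no_o].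
  by apply/card_gt0P; exists x.
have : \sum_(p : O * bool) f p.1 p.2 = 0 by apply: big1 => -[u b]; have := no_o u.
by rewrite f1 => /eqP; rewrite oner_eq0.
Qed.

Lemma hmin_le_hfun th s a o' o b : hmin pihi pilo pib zeta th s a <= h th o' s a o b.
Proof.
exact: (bigmin_le _ (o', o, b) (fun p : O * O * bool => h th p.1.1 s a p.1.2 p.2)).
Qed.

Lemma hfun_le_hmax th s a o' o b : h th o' s a o b <= hmax pihi pilo pib zeta th s a.
Proof.
exact: (le_bigmax _ (fun p : O * O * bool => h th p.1.1 s a p.1.2 p.2) (o', o, b)).
Qed.

Hypothesis hfun_gt0 : forall th, Theta th -> forall o' s a o b, 0 < h th o' s a o b.

Lemma hmin_gt0 (o0 : O) th s a : Theta th -> 0 < hmin pihi pilo pib zeta th s a.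
Proof.
move=> Tth; apply: (big_ind (fun v => 0 < v)) => [|u v u0 v0|p _]; last exact: hfun_gt0.
  exact: lt_le_trans (hfun_gt0 Tth o0 s a o0 true) (hfun_le_hmax _ _ _ _ _ _).
by rewrite lt_min u0 v0.
Qed.

Lemma inv_hmin_le_zcoef (o0 : O) th th' s a : Theta th -> Theta th' ->
  (hmin pihi pilo pib zeta th s a)^-1 <= zcoef pihi pilo pib zeta th th'.
Proof.
move=> Tth Tth'; have m0 := hmin_gt0 o0 s a Tth; have m0' := hmin_gt0 o0 s a Tth'.
apply: le_trans (le_bigmax _ (fun p : S * A => _) (s, a)) => /=.
have -> : (hmin pihi pilo pib zeta th s a)^-1
    = hmin pihi pilo pib zeta th' s a
      / (hmin pihi pilo pib zeta th s a * hmin pihi pilo pib zeta th' s a).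
  by field; rewrite !gt_eqF.
rewrite ler_pM2r ?invr_gt0 ?mulr_gt0 //.
rewrite (le_trans (hmin_le_hfun _ _ _ o0 o0 true)) // (le_trans (hfun_le_hmax _ _ _ o0 o0 true)) //.
by rewrite le_max lexx orbT.
Qed.

Hypothesis hfun_lipschitz : exists L, 0 <= L /\ forall o' s a o b (x y : param),
  Theta x -> Theta y -> `|h x o' s a o b - h y o' s a o b| <= L * dist2 x y.

Let Lip_set_nonempty th d :
  [set L : R | 0 <= L /\ forall o' s a o b (x y : param), Theta x -> Theta y ->
    dist2 x th <= d -> dist2 y th <= d ->
    `|h x o' s a o b - h y o' s a o b| <= L * dist2 x y] !=set0.
Proof.
by have [L [L0 hL]] := hfun_lipschitz; exists L; split => // *; apply: hL.
Qed.

Lemma Lip_ge0 th d : 0 <= Lip pihi pilo pib zeta Th Tl Tb th d.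
Proof. by apply: lb_le_inf (Lip_set_nonempty th d) _ => L []. Qed.

(* The infimum bound divides by [d]; for [d = 0] the global constant is used instead. *)
Lemma hfun_sub_le_Lip th th' o' s a o b : Theta th -> Theta th' ->
  `|h th o' s a o b - h th' o' s a o b|
  <= Lip pihi pilo pib zeta Th Tl Tb th (dist2 th' th) * dist2 th' th.
Proof.
move=> Tth Tth'; set d := dist2 th' th; rewrite distrC; have d0 : 0 <= d := dist2_ge0 _ _.
have [d_eq0|d_neq0] := eqVneq d 0.
  have [L [_ hL]] := hfun_lipschitz; rewrite d_eq0 mulr0.
  by have := hL o' s a o b _ _ Tth' Tth; rewrite -/d d_eq0 mulr0.
have dpos : 0 < d by rewrite lt_def d_neq0 d0.
rewrite -ler_pdivrMr //; apply: lb_le_inf (Lip_set_nonempty th d) _ => L [_ hL].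
by rewrite ler_pdivrMr // hL // dist2xx.
Qed.

Variables (eps_b : R) (pob : param -> S -> O * bool -> R).
Hypotheses (eps_b_gt0 : 0 < eps_b) (zeta_gt0 : 0 < zeta).
Hypothesis pob_bounds : forall th, Theta th -> forall s (o' o : O) (b : bool),
    0 < eps_b * zeta * pob th s (o, b) /\
    eps_b * zeta * pob th s (o, b) <= pib th.2 s o' b * pihibar pihi zeta th.1.1 s o' b o /\
    pib th.2 s o' b * pihibar pihi zeta th.1.1 s o' b o <= eps_b^-1 * cardO R O * pob th s (o, b).

Definition kern_density (th : param) (t : int) : O * bool -> R :=
  fun x => pob th (sq t) x * pilo th.1.2 (sq t) x.1 (aq t).

Let pob_gt0 th s x : Theta th -> 0 < pob th s x.
Proof.
move=> Tth; have [+ _] := pob_bounds Tth s x.1 x.1 x.2.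
by rewrite pmulr_rgt0 ?mulr_gt0 //; case: x.
Qed.

Let pilo_gt0 th s o a : Theta th -> 0 < pilo th.1.2 s o a.
Proof.
move=> Tth; have [_ [lo_le _]] := pob_bounds Tth s o o true.
have := hfun_gt0 Tth o s a o true; rewrite /hfun pmulr_rgt0 //.
by rewrite (lt_le_trans _ lo_le) // !mulr_gt0 // pob_gt0.
Qed.

Lemma kern_density_gt0 th t : Theta th -> pos_fun (kern_density th t).
Proof. by move=> Tth x; rewrite mulr_gt0 ?pob_gt0 ?pilo_gt0. Qed.

Lemma kern_sandwiched th t : Theta th ->
  sandwiched (eps_b * zeta) (eps_b^-1 * cardO R O) (fun=> 1) (kern_density th t) (kern th t).
Proof.
move=> Tth y [u b]; have [_ [lo_le le_hi]] := pob_bounds Tth (sq t) y.1 u b.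
by rewrite /kern /hfun /kern_density mul1r !mulrA !ler_pM2r ?pilo_gt0 // lo_le.
Qed.

End PolicyKernels.

Unset Implicit Arguments.

Theorem lemma11 (R : realType) (S A O : finType) (nh nl nb : nat)
  (Th : set 'rV[R]_nh) (Tl : set 'rV[R]_nl) (Tb : set 'rV[R]_nb)
  (Uh : set 'rV[R]_nh) (Ul : set 'rV[R]_nl) (Ub : set 'rV[R]_nb)
  (pihi : 'rV[R]_nh -> S -> O -> R)
  (pilo : 'rV[R]_nl -> S -> O -> A -> R)
  (pib : 'rV[R]_nb -> S -> O -> bool -> R)
  (zeta eps_b : R)
  (* Theta = Th x Tl x Tb convex and compact *)
  (cvxh : convex_rV Th) (cvxl : convex_rV Tl) (cvxb : convex_rV Tb)
  (cpth : compact Th) (cptl : compact Tl) (cptb : compact Tb)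
  (* open neighbourhood on which the policies are defined, positive, C^1 *)
  (oph : open Uh) (opl : open Ul) (opb : open Ub)
  (subh : Th `<=` Uh) (subl : Tl `<=` Ul) (subb : Tb `<=` Ub)
  (dhi : forall x s, Uh x -> is_distr (pihi x s))
  (dlo : forall x s o, Ul x -> is_distr (pilo x s o))
  (db : forall x s o, Ub x -> is_distr (pib x s o))
  (poshi : forall x s o, Uh x -> 0 < pihi x s o)
  (poslo : forall x s o a, Ul x -> 0 < pilo x s o a)
  (posb : forall x s o b, Ub x -> 0 < pib x s o b)
  (c1hi : forall s o, C1_on Uh (fun x => pihi x s o))
  (c1lo : forall s o a, C1_on Ul (fun x => pilo x s o a))
  (c1b : forall s o b, C1_on Ub (fun x => pib x s o b))
  (* zeta in (0,1) *)
  (zeta_gt0 : 0 < zeta) (zeta_lt1 : zeta < 1)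
  (* the constant eps_b *)
  (eps_gt0 : 0 < eps_b)
  (eps_ok : exists pobar : param R nh nl nb -> S -> O * bool -> R,
     forall th : param R nh nl nb, inTheta Th Tl Tb th ->
     forall s : S, is_distr (pobar th s) /\
     forall (o' o : O) (b : bool),
       0 < eps_b * zeta * pobar th s (o, b) /\
       eps_b * zeta * pobar th s (o, b)
         <= pib th.2 s o' b * pihibar pihi zeta th.1.1 s o' b o /\
       pib th.2 s o' b * pihibar pihi zeta th.1.1 s o' b o
         <= eps_b^-1 * cardO R O * pobar th s (o, b))
  (* observation sequence, time window, parameters *)
  (sq : int -> S) (aq : int -> A) (t1 t2 : int) (t12 : t1 <= t2)
  (th th' : param R nh nl nb)
  (thT : inTheta Th Tl Tb th) (th'T : inTheta Th Tl Tb th')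
  (phi phi' rho rho' : int -> meas R O)
  (phiP : forall t, t1 <= t <= t2 -> strict_prob (phi t))
  (phi'P : forall t, t1 <= t <= t2 -> strict_prob (phi' t))
  (rhoP : forall t, t1 <= t <= t2 -> strict_prob (rho t))
  (rho'P : forall t, t1 <= t <= t2 -> strict_prob (rho' t))
  (phiF : forall t, t1 < t <= t2 -> forall o b,
     Fop pihi pilo pib zeta sq aq th t (phi (t - 1)) o b = phi t o b)
  (phi'F : forall t, t1 < t <= t2 -> forall o b,
     Fop pihi pilo pib zeta sq aq th' t (phi' (t - 1)) o b = phi' t o b)
  (rhoB : forall t, t1 <= t < t2 -> forall o b,
     Bop pihi pilo pib zeta sq aq th t (rho (t + 1)) o b = rho t o b)
  (rho'B : forall t, t1 <= t < t2 -> forall o b,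
     Bop pihi pilo pib zeta sq aq th' t (rho' (t + 1)) o b = rho' t o b) :
  let d := dist2 th' th in
  let bound :=
    (1 - eps_b ^+ 2 * zeta / cardO R O) ^+ `|t2 - t1|%N
    + cardO R O * zcoef pihi pilo pib zeta th th'
        * Lip pihi pilo pib zeta Th Tl Tb th d / (eps_b ^+ 2 * zeta) * d in
  tv (otimes (phi t2) (rho t2)) (otimes (phi' t2) (rho t2)) <= bound /\
  tv (otimes (phi' t1) (rho t1)) (otimes (phi' t1) (rho' t1)) <= bound.
Proof.
move=> d bound.
have /card_gt0P[u0 _] : (0 < #|O|)%N by apply: strict_prob_card_gt0 (phiP t1 _); lia.
have [pob pob_distr_bounds] := eps_ok.
have pob_bounds th Tth s := (pob_distr_bounds th Tth s).2.
have h_gt0 := hfun_gt0 subh subl subb zeta_gt0 zeta_lt1 poshi poslo posb.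
have h_lip := hfun_lipschitz subh subl subb zeta_gt0 zeta_lt1 cvxh cvxl cvxb cpth cptl cptb
  dhi dlo db c1hi c1lo c1b.
have O_gt0 : 0 < cardO R O := lt_le_trans ltr01 (cardO_ge1 R u0).
pose lo := eps_b * zeta; pose hi := eps_b^-1 * cardO R O.
pose E := Lip pihi pilo pib zeta Th Tl Tb th d * d.
have -> : bound = (1 - lo / hi) ^+ `|t2 - t1|%N + zcoef pihi pilo pib zeta th th' * E / (lo / hi).
  by rewrite /bound /lo /hi /E; congr (_ ^+ _ + _); field; rewrite !gt_eqF.
rewrite !tv_otimesE.
apply: (smoothing_stability (u0, true) (E := E)
  (m := fun t => hmin pihi pilo pib zeta th (sq t) (aq t))
  (k := kern pihi pilo pib zeta sq aq th) (k' := kern pihi pilo pib zeta sq aq th')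
  (nu := kern_density pilo sq aq pob th) (nu' := kern_density pilo sq aq pob th')
  (phi := fun t => meas_fun (phi t)) (phi' := fun t => meas_fun (phi' t))
  (rho := fun t => meas_fun (rho t)) (rho' := fun t => meas_fun (rho' t))).
- by rewrite mulr_gt0.
- exact: (fun t => kern_density_gt0 sq aq h_gt0 eps_gt0 zeta_gt0 pob_bounds t thT).
- exact: (fun t => kern_density_gt0 sq aq h_gt0 eps_gt0 zeta_gt0 pob_bounds t th'T).
- exact: (fun t => kern_sandwiched sq aq h_gt0 eps_gt0 zeta_gt0 pob_bounds t thT).
- exact: (fun t => kern_sandwiched sq aq h_gt0 eps_gt0 zeta_gt0 pob_bounds t th'T).
- exact: (fun t => hmin_gt0 h_gt0 u0 (sq t) (aq t) thT).
- by move=> t y x; apply: hmin_le_hfun.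
- exact: (fun t y x => hfun_sub_le_Lip h_lip y.1 (sq t) (aq t) x.1 x.2 thT th'T).
- move=> t; rewrite mulrC ler_wpM2r ?(inv_hmin_le_zcoef h_gt0 u0 (sq t) (aq t) thT th'T) //.
  by rewrite mulr_ge0 ?dist2_ge0 ?(Lip_ge0 h_lip).
- exact: t12.
- by move=> t /phiP/strict_prob_gt0.
- by move=> t /phi'P/strict_prob_gt0.
- by move=> t /rhoP/strict_prob_gt0.
- by move=> t /rho'P/strict_prob_gt0.
- by move=> t /phiF/Fop_meas_fun.
- by move=> t /phi'F/Fop_meas_fun.
- by move=> t /rhoB/Bop_meas_fun.
- by move=> t /rho'B/Bop_meas_fun.
Qed.
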